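(* Let $A_1,\dots,A_k\in H_n$ and $B_1,\dots,B_k\in H_m$. There is a completely positive map $\Phi:M_n\to M_m$ with $\Phi(A_j)=B_j$ for $j=1,\dots,k$ if and only if there exist $\gamma>0$ and a unital completely positive map $\Psi:M_{n+1}\to M_m$ with $\Psi(A_j\oplus[0])=\gamma^{-1}B_j$ for $j=1,\dots,k$.
   Context: $H_n$ is the set of $n\times n$ Hermitian matrices; $A\oplus[0]$ denotes the $(n+1)\times(n+1)$ block diagonal matrix with blocks $A$ and the $1\times1$ zero matrix. A linear map is completely positive if all ampliations $I_k\otimes\Phi$ preserve positive semidefiniteness; unital means $\Psi(I_{n+1})=I_m$. *)

(* Matrices over an arbitrary numClosedFieldType C
   (the complex numbers being the motivating instance). *)
From HB Require Import structures.
From mathcomp Require Import all_boot all_order all_algebra.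
Set Implicit Arguments. Unset Strict Implicit. Unset Printing Implicit Defensive.
Import Order.TTheory GRing.Theory Num.Theory.
Local Open Scope ring_scope.
Local Open Scope sesquilinear_scope.

Definition psdmx {C : numClosedFieldType} (p : nat) (M : 'M[C]_p) : Prop :=
  M \is hermsymmx /\ forall x : 'rV[C]_p, 0 <= (x *m M *m x ^t*) 0 0.

Definition ampl {C : numClosedFieldType} (n m k : nat)
  (Phi : 'M[C]_n -> 'M[C]_m)
  (X : 'M[C]_(\sum_(i < k) n)) : 'M[C]_(\sum_(i < k) m) :=
  \mxblock_(i < k, j < k) Phi (submxblock X i j).

Definition completely_positive {C : numClosedFieldType} (n m : nat)
  (Phi : 'M[C]_n -> 'M[C]_m) : Prop :=
  forall (k : nat) (X : 'M[C]_(\sum_(i < k) n)), psdmx X -> psdmx (@ampl C n m k Phi X).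

Definition unital {C : numClosedFieldType} (n m : nat)
  (Psi : 'M[C]_n -> 'M[C]_m) : Prop := Psi 1%:M = 1%:M.

(** Forward direction: [P := Phi 1] is positive semidefinite, hence Hermitian,
    so for [gamma] large enough [1 - gamma^-1 P] is positive semidefinite, say
    [W^* W]. Then [Psi Y := gamma^-1 Phi(Y_11) + Y_22 (1 - gamma^-1 P)] is
    unital, it maps [A_j (+) 0] to [gamma^-1 B_j], and it is completely positive
    as a sum of the compression [Y |-> Phi(Y_11)] and of the Kraus map with
    operators [w_l^* e], where [w_l] are the rows of [W] and [e] the last basis
    row vector. Backward direction: [Phi X := gamma Psi(X (+) 0)] is a
    compression of [Psi]. *)
From HB Require Import structures.
From mathcomp Require Import all_boot all_order all_algebra.
Set Implicit Arguments. Unset Strict Implicit. Unset Printing Implicit Defensive.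
Import Order.TTheory GRing.Theory Num.Theory.
Local Open Scope ring_scope.
Local Open Scope sesquilinear_scope.

Lemma map_mxblock (T U : Type) (f : T -> U) p q (p_ : 'I_p -> nat) (q_ : 'I_q -> nat)
    (B_ : forall i j, 'M[T]_(p_ i, q_ j)) :
  (\mxblock_(i, j) B_ i j) ^ f = \mxblock_(i, j) (B_ i j) ^ f.
Proof. by apply/matrixP => i j; rewrite !mxE. Qed.

Section PositiveSemidefinite.
Variable C : numClosedFieldType.

Lemma hermitianmx_trC p (M : 'M[C]_p) : M \is hermsymmx <-> M = M ^t*.
Proof. by rewrite is_hermitianmxE /= expr0 scale1r; split => /eqP. Qed.

Lemma trmxC_mul p q r (A : 'M[C]_(p, q)) (B : 'M[C]_(q, r)) :
  (A *m B) ^t* = B ^t* *m A ^t*.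
Proof. by rewrite trmx_mul map_mxM. Qed.

Lemma psdmx_congr p q (M : 'M[C]_(q, p)) (X : 'M[C]_p) :
  psdmx X -> psdmx (M *m X *m M ^t*).
Proof.
move=> [/hermitianmx_trC hX pX]; split.
  by apply/hermitianmx_trC; rewrite !trmxC_mul trmxCK -hX mulmxA.
by move=> x; have := pX (x *m M); rewrite trmxC_mul !mulmxA.
Qed.

Lemma psdmx_add p (X Y : 'M[C]_p) : psdmx X -> psdmx Y -> psdmx (X + Y).
Proof.
move=> [/hermitianmx_trC hX pX] [/hermitianmx_trC hY pY]; split.
  by apply/hermitianmx_trC; rewrite linearD /= map_mxD -hX -hY.
by move=> x; rewrite mulmxDr mulmxDl mxE addr_ge0.
Qed.

Lemma psdmx0 p : psdmx (0 : 'M[C]_p).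
Proof.
split; first by apply/hermitianmx_trC; rewrite trmx0 map_mx0.
by move=> x; rewrite mulmx0 mul0mx mxE.
Qed.

Lemma psdmx1 p : psdmx (1%:M : 'M[C]_p).
Proof.
split; first by apply/hermitianmx_trC; rewrite trmx1 map_mx1.
move=> x; rewrite mulmx1 mxE; apply: sumr_ge0 => i _.
by rewrite !mxE mul_conjC_ge0.
Qed.

Lemma psdmx_mxblock1 p (P : 'M[C]_p) :
  psdmx (\mxblock_(i < 1, j < 1) P : 'M[C]_(\sum_(i < 1) p)) <-> psdmx P.
Proof.
have trC_mxrow1 (x : 'rV[C]_p) : (\mxrow_(j < 1) x) ^t* = \mxcol_(i < 1) x ^t*.
  by apply/matrixP => i j; rewrite !mxE.
split=> [[/hermitianmx_trC hX pX]|psdP].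
  split=> [|x].
    apply/hermitianmx_trC; move/(congr1 (fun M => submxblock M ord0 ord0)): hX.
    by rewrite tr_mxblock map_mxblock !mxblockK.
  have := pX (\mxrow_(j < 1) x).
  by rewrite trC_mxrow1 mul_mxrow_mxblock mul_mxrow_mxcol !big_ord1.
pose E : 'M[C]_(\sum_(i < 1) p, p) := \mxcol_(i < 1) 1%:M.
have E_trC : E ^t* = \mxrow_(j < 1) 1%:M.
  by apply/matrixP => i j; rewrite !mxE conjC_nat eq_sym.
suff -> : \mxblock_(i < 1, j < 1) P = E *m P *m E ^t* by apply: psdmx_congr.
rewrite E_trC -mulmxA mul_mxrow mul_mxcol_mxrow.
by apply: eq_mxblock => i j; rewrite mul1mx mulmx1.
Qed.

End PositiveSemidefinite.

Section CompletelyPositive.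
Variable C : numClosedFieldType.

Lemma cp_eq n m (F G : 'M[C]_n -> 'M[C]_m) :
  F =1 G -> completely_positive F -> completely_positive G.
Proof.
move=> FG cpF k X /cpF; congr psdmx.
by apply: eq_mxblock => i j; rewrite FG.
Qed.

Lemma cp_add n m (F G : 'M[C]_n -> 'M[C]_m) :
  completely_positive F -> completely_positive G ->
  completely_positive (fun X => F X + G X).
Proof.
move=> cpF cpG k X psdX; rewrite /ampl mxblockD.
by apply: psdmx_add; [apply: cpF | apply: cpG].
Qed.

Lemma cp_sum n m r (F : 'I_r -> 'M[C]_n -> 'M[C]_m) :
  (forall l, completely_positive (F l)) ->
  completely_positive (fun X => \sum_(l < r) F l X).
Proof.
elim: r F => [|r IHr] F cpF.
  move=> k X _; rewrite /ampl; under eq_mxblock do rewrite big_ord0.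
  by rewrite mxblock0; apply: psdmx0.
apply: cp_eq (cp_add (IHr (fun l => F (widen_ord (leqnSn r) l)) _) (cpF ord_max)) => //.
by move=> X; rewrite big_ord_recr.
Qed.

Lemma cp_comp n m p (F : 'M[C]_m -> 'M[C]_p) (G : 'M[C]_n -> 'M[C]_m) :
  completely_positive F -> completely_positive G ->
  completely_positive (fun X => F (G X)).
Proof.
move=> cpF cpG k X /cpG /cpF; congr psdmx.
by apply: eq_mxblock => i j; rewrite mxblockK.
Qed.

Lemma cp_congr n m (M : 'M[C]_(m, n)) :
  completely_positive (fun X => M *m X *m M ^t*).
Proof.
move=> k X psdX.
pose D : 'M[C]_(\sum_(i < k) m, \sum_(i < k) n) :=
  \mxblock_(i, j) (if i == j then M else 0).
suff -> : ampl (fun X => M *m X *m M ^t*) X = D *m X *m D ^t* by apply: psdmx_congr.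
have D_trC : D ^t* = \mxblock_(i, j) (if i == j then M ^t* else 0).
  rewrite tr_mxblock map_mxblock; apply: eq_mxblock => i j.
  by rewrite eq_sym; case: eqP => // _; rewrite trmx0 map_mx0.
rewrite D_trC -[X in D *m X](submxblockK X) !mul_mxblock /ampl.
apply: eq_mxblock => i j.
rewrite (bigD1 j) //= eqxx [X in _ + X]big1 ?addr0; last first.
  by move=> l /negbTE ->; rewrite mulmx0.
rewrite (bigD1 i) //= eqxx [X in _ + X]big1 ?addr0 //.
by move=> l /negbTE; rewrite eq_sym => ->; rewrite mul0mx.
Qed.

Lemma cp_scale n m (c : C) (F : 'M[C]_n -> 'M[C]_m) :
  0 <= c -> completely_positive F -> completely_positive (fun X => c *: F X).
Proof.
move=> c_ge0 cpF; apply: cp_eq (cp_comp (cp_congr (sqrtC c)%:M) cpF) => X.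
rewrite tr_scalar_mx map_scalar_mx mul_scalar_mx mul_mx_scalar scalerA.
congr (_ *: _); rewrite -[RHS]sqrtCK expr2; congr (_ * _).
by apply: geC0_conj; rewrite sqrtC_ge0.
Qed.

Lemma cp_psdmx1 n m (F : 'M[C]_n -> 'M[C]_m) :
  completely_positive F -> psdmx (F 1%:M).
Proof.
move=> /(_ 1%N _ ((psdmx_mxblock1 (1%:M : 'M[C]_n)).2 (psdmx1 _ _))).
by rewrite /ampl; under eq_mxblock do rewrite mxblockK; move/psdmx_mxblock1.
Qed.

End CompletelyPositive.

Section Compressions.
Variable C : numClosedFieldType.
Variables p q : nat.

Lemma ulsubmx_congr (Y : 'M[C]_(p + q)) :
  ulsubmx Y = row_mx 1%:M 0 *m Y *m (row_mx 1%:M 0) ^t*.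
Proof.
rewrite tr_row_mx map_col_mx trmx1 trmx0 map_mx1 map_mx0 -[Y in RHS]submxK.
by rewrite mul_row_block !mul1mx !mul0mx !addr0 mul_row_col mulmx1 mulmx0 addr0.
Qed.

Lemma drsubmx_congr (Y : 'M[C]_(p + q)) :
  drsubmx Y = row_mx 0 1%:M *m Y *m (row_mx 0 1%:M) ^t*.
Proof.
rewrite tr_row_mx map_col_mx trmx1 trmx0 map_mx1 map_mx0 -[Y in RHS]submxK.
by rewrite mul_row_block !mul1mx !mul0mx !add0r mul_row_col mulmx1 mulmx0 add0r.
Qed.

Lemma block_mx_ul_congr (X : 'M[C]_p) :
  block_mx X 0 0 (0 : 'M_q) = col_mx 1%:M 0 *m X *m (col_mx 1%:M 0) ^t*.
Proof.
rewrite tr_col_mx map_row_mx trmx1 trmx0 map_mx1 map_mx0.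
by rewrite mul_col_mx mul1mx mul0mx mul_col_row mulmx1 !mulmx0 mul0mx.
Qed.

End Compressions.

Section HermitianFactor.
Variable C : numClosedFieldType.

Lemma diag_mx_sqrtC m (e : 'rV[C]_m) : (forall i, 0 <= e 0 i) ->
  diag_mx e = (diag_mx (map_mx sqrtC e)) ^t* *m diag_mx (map_mx sqrtC e).
Proof.
move=> e_ge0; rewrite tr_diag_mx map_diag_mx mulmx_diag; congr diag_mx.
apply/matrixP => i j; rewrite !ord1 !mxE.
rewrite [X in _ = X * _](_ : _ = sqrtC (e 0 j)) -?expr2 ?sqrtCK //.
by apply: geC0_conj; rewrite sqrtC_ge0.
Qed.

Lemma hermitian_spectral m (P : 'M[C]_m) : P \is hermsymmx ->
  P = (spectralmx P) ^t* *m diag_mx (spectral_diag P) *m spectralmx P.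
Proof.
move=> /hermitian_normalmx /orthomx_spectralP {1}->.
by rewrite invmx_unitary ?spectral_unitarymx.
Qed.

Lemma hermitian_scaled_complement_factor m (P : 'M[C]_m) : P \is hermsymmx ->
  exists2 g : C, 0 < g & exists W : 'M[C]_m, 1%:M - g^-1 *: P = W ^t* *m W.
Proof.
move=> hermP; set U := spectralmx P; set d := spectral_diag P.
have d_real i : d 0 i \is Num.real.
  by have /mxOverP := hermitian_spectral_diag_real hermP; apply.
pose g := 1 + \sum_i `|d 0 i|.
have g_gt0 : 0 < g by rewrite ltr_pwDl ?sumr_ge0.
pose e := \row_i (1 - g^-1 * d 0 i).
have e_ge0 i : 0 <= e 0 i.
  rewrite mxE subr_ge0 mulrC ler_pdivrMr // mul1r.
  apply: le_trans (real_ler_norm (d_real i)) _.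
  by rewrite /g (bigD1 i) //= addrCA lerDl addr_ge0 ?sumr_ge0.
exists g => //; exists (diag_mx (map_mx sqrtC e) *m U).
rewrite trmxC_mul mulmxA -(mulmxA _ _ (diag_mx _)) -diag_mx_sqrtC //.
have UU : U ^t* *m U = 1%:M.
  by rewrite -invmx_unitary ?mulVmx ?unitarymx_unit ?spectral_unitarymx.
have -> : diag_mx e = 1%:M - g^-1 *: diag_mx d.
  apply/matrixP => i j; rewrite !mxE.
  by case: eqP => [->|_]; rewrite ?mulr1n ?mulr0n ?mulr0 ?subr0.
by rewrite mulmxBr mulmx1 mulmxBl UU -scalemxAr -scalemxAl -hermitian_spectral.
Qed.

End HermitianFactor.

Section CornerMaps.
Variable C : numClosedFieldType.
Variables n m : nat.

Lemma trmxC_mulmx_sum_row r (W : 'M[C]_(r, m)) :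
  W ^t* *m W = \sum_(l < r) (row l W) ^t* *m row l W.
Proof.
apply/matrixP => i j; rewrite summxE !mxE; apply: eq_bigr => l _.
by rewrite !mxE big_ord1 !mxE.
Qed.

Lemma cp_drsubmx_scale r (W : 'M[C]_(r, m)) :
  completely_positive (fun Y : 'M[C]_(n + 1) => drsubmx Y 0 0 *: (W ^t* *m W)).
Proof.
pose K (l : 'I_r) : 'M[C]_(m, n + 1) := (row l W) ^t* *m row_mx 0 1%:M.
apply: cp_eq (cp_sum (fun l => cp_congr (K l))) => Y.
rewrite trmxC_mulmx_sum_row scaler_sumr; apply: eq_bigr => l _.
rewrite /K trmxC_mul trmxCK !mulmxA -(mulmxA _ _ Y) -(mulmxA _ (_ *m Y)).
by rewrite -drsubmx_congr {1}[drsubmx Y]mx11_scalar mul_mx_scalar -scalemxAl.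
Qed.

Definition corner_extension (Phi : 'M[C]_n -> 'M[C]_m) (g : C) (Q : 'M[C]_m)
    (Y : 'M[C]_(n + 1)) : 'M[C]_m :=
  g^-1 *: Phi (ulsubmx Y) + drsubmx Y 0 0 *: Q.

Lemma corner_extension_is_linear (Phi : {linear 'M[C]_n -> 'M[C]_m}) g Q :
  linear (corner_extension Phi g Q).
Proof.
move=> a X Y; rewrite /corner_extension.
have -> : ulsubmx (a *: X + Y) = a *: ulsubmx X + ulsubmx Y.
  by apply/matrixP => i j; rewrite !mxE.
rewrite linearP !mxE !scalerDr scalerDl !scalerA.
by rewrite addrACA [g^-1 * a]mulrC.
Qed.

HB.instance Definition _ (Phi : {linear 'M[C]_n -> 'M[C]_m}) g Q :=
  GRing.isLinear.Build C 'M[C]_(n + 1) 'M[C]_m _ (corner_extension Phi g Q)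
    (corner_extension_is_linear Phi g Q).

Lemma corner_extension_block (Phi : 'M[C]_n -> 'M[C]_m) g Q (X : 'M[C]_n) :
  corner_extension Phi g Q (block_mx X 0 0 (0 : 'M_1)) = g^-1 *: Phi X.
Proof. by rewrite /corner_extension block_mxKul block_mxKdr mxE scale0r addr0. Qed.

Lemma corner_extension_unital (Phi : 'M[C]_n -> 'M[C]_m) g :
  unital (corner_extension Phi g (1%:M - g^-1 *: Phi 1%:M)).
Proof.
rewrite /unital /corner_extension (scalar_mx_block n 1 1).
by rewrite block_mxKul block_mxKdr mxE scale1r addrC subrK.
Qed.

Lemma cp_corner_extension (Phi : 'M[C]_n -> 'M[C]_m) g r (W : 'M[C]_(r, m)) :
  0 < g -> completely_positive Phi ->
  completely_positive (corner_extension Phi g (W ^t* *m W)).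
Proof.
move=> g_gt0 cpPhi; have ginv_ge0 : 0 <= g^-1 by rewrite invr_ge0 ltW.
have cp_ul := cp_comp cpPhi (cp_congr (row_mx 1%:M 0 : 'M[C]_(n, n + 1))).
apply: cp_eq (cp_add (cp_scale ginv_ge0 cp_ul) (cp_drsubmx_scale W)) => Y.
by rewrite /corner_extension ulsubmx_congr.
Qed.

Definition corner_restriction (Psi : 'M[C]_(n + 1) -> 'M[C]_m) (g : C)
    (X : 'M[C]_n) : 'M[C]_m :=
  g *: Psi (block_mx X 0 0 (0 : 'M_1)).

Lemma corner_restriction_is_linear (Psi : {linear 'M[C]_(n + 1) -> 'M[C]_m}) g :
  linear (corner_restriction Psi g).
Proof.
move=> a X Y; rewrite /corner_restriction.
have -> : block_mx (a *: X + Y) 0 0 (0 : 'M_1) =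
          a *: block_mx X 0 0 (0 : 'M_1) + block_mx Y 0 0 0.
  by rewrite scale_block_mx add_block_mx !scaler0 !addr0.
by rewrite linearP scalerDr !scalerA mulrC.
Qed.

HB.instance Definition _ (Psi : {linear 'M[C]_(n + 1) -> 'M[C]_m}) g :=
  GRing.isLinear.Build C 'M[C]_n 'M[C]_m _ (corner_restriction Psi g)
    (corner_restriction_is_linear Psi g).

Lemma cp_corner_restriction (Psi : 'M[C]_(n + 1) -> 'M[C]_m) g :
  0 <= g -> completely_positive Psi -> completely_positive (corner_restriction Psi g).
Proof.
move=> g_ge0 cpPsi; apply: cp_eq (cp_scale g_ge0 (cp_comp cpPsi (cp_congr _))) => X.
by rewrite /corner_restriction block_mx_ul_congr.
Qed.

End CornerMaps.

Theorem theorem4p1 (C : numClosedFieldType) (n m k : nat)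
  (A : 'I_k -> 'M[C]_n) (B : 'I_k -> 'M[C]_m)
  (hA : forall j, A j \is hermsymmx) (hB : forall j, B j \is hermsymmx) :
  (exists Phi : {linear 'M[C]_n -> 'M[C]_m},
      completely_positive Phi /\ forall j, Phi (A j) = B j)
  <->
  (exists gamma : C, 0 < gamma /\
     exists Psi : {linear 'M[C]_(n + 1) -> 'M[C]_m},
       unital Psi /\ completely_positive Psi /\
       forall j, Psi (block_mx (A j) 0 0 (0 : 'M[C]_1)) = gamma^-1 *: B j).
Proof.
split=> [[Phi [cpPhi PhiAB]] | [g [g_gt0 [Psi [_ [cpPsi PsiAB]]]]]].
- have [hermPhi1 _] := cp_psdmx1 cpPhi.
  have [g g_gt0 [W Q_def]] := hermitian_scaled_complement_factor hermPhi1.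
  exists g; split => //.
  exists (corner_extension Phi g (1%:M - g^-1 *: Phi 1%:M) : {linear _ -> _}).
  split; [exact: corner_extension_unital | split].
  + by rewrite Q_def; apply: cp_corner_extension.
  + by move=> j; rewrite /= corner_extension_block PhiAB.
- exists (corner_restriction Psi g : {linear _ -> _}); split.
  + exact: cp_corner_restriction (ltW g_gt0) cpPsi.
  + by move=> j; rewrite /= /corner_restriction PsiAB scalerA mulfV ?gt_eqF ?scale1r.
Qed.
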